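(* Let $\rho:\mathbb{R}\to\mathbb{R}$ be a nonlinearity and $\mathcal{J}$ a finite index set. Suppose that $\{(\alpha_s,\beta_s,\gamma_s)\}_{s\in\mathcal{J}}$ are triples of real numbers such that $\sum_{s\in\mathcal{J}}\alpha_s\rho(\beta_s\cdot+\gamma_s)$ is constant, and let $j^*\in\mathcal{J}$ be such that $\alpha_{j^*}\ne0$. Then there exist a set $\mathcal{I}\subset\mathcal{J}$ with $j^*\in\mathcal{I}$, real numbers $\{\tilde\alpha_s\}_{s\in\mathcal{I}}$ with $\tilde\alpha_{j^*}\ne0$, and $\zeta\in\mathbb{R}$ such that $(\zeta,\{(\tilde\alpha_s,\beta_s,\gamma_s)\}_{s\in\mathcal{I}})$ is an affine symmetry of $\rho$.
   Context: A nonlinearity is a continuous function $\rho:\mathbb{R}\to\mathbb{R}$ that is not of the form $t\mapsto at+b$. An affine symmetry of $\rho$ is a collection $(\zeta,\{(\alpha_s,\beta_s,\gamma_s)\}_{s\in\mathcal{I}})$ of reals, with $\mathcal{I}$ nonempty finite, such that $\sum_{s\in\mathcal{I}}\alpha_s\rho(\beta_st+\gamma_s)=\zeta$ for all $t\in\mathbb{R}$, and there is no proper subset $\mathcal{I}'\subsetneq\mathcal{I}$ for which $\{\rho(\beta_s\cdot+\gamma_s):s\in\mathcal{I}'\}\cup\{\mathbf1\}$ is linearly dependent ($\mathbf1$ the constant function $1$). *)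

From HB Require Import structures.
From mathcomp Require Import all_boot all_order all_algebra.
From mathcomp Require Import all_classical all_reals topology normedtype.
Set Implicit Arguments. Unset Strict Implicit. Unset Printing Implicit Defensive.
Import Order.TTheory GRing.Theory Num.Theory.
Import numFieldNormedType.Exports.
Local Open Scope ring_scope.

Definition nonlinearity (R : realType) (rho : R -> R) : Prop :=
  continuous rho /\ ~ (exists a b : R, forall t : R, rho t = a * t + b).

Definition lin_dep_with_one (R : realType) (J : finType) (f : J -> R -> R)
    (I : {set J}) : Prop :=
  exists (c : J -> R) (c0 : R),
    (c0 != 0 \/ exists s, s \in I /\ c s != 0) /\
    (forall t : R, \sum_(s in I) c s * f s t + c0 = 0).

Definition affine_symmetry (R : realType) (rho : R -> R) (J : finType)
    (I : {set J}) (zeta : R) (alpha beta gamma : J -> R) : Prop :=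
  I != finset.set0 :> {set J} /\
  (forall t : R, \sum_(s in I) alpha s * rho (beta s * t + gamma s) = zeta) /\
  (forall I' : {set J}, I' \proper I ->
     ~ lin_dep_with_one (fun s t => rho (beta s * t + gamma s)) I').

From HB Require Import structures.
From mathcomp Require Import all_boot all_order all_algebra.
From mathcomp Require Import all_classical all_reals topology normedtype.
Set Implicit Arguments. Unset Strict Implicit. Unset Printing Implicit Defensive.
Import Order.TTheory GRing.Theory Num.Theory.
Import numFieldNormedType.Exports.
Local Open Scope ring_scope.

(* Shrink the index set while keeping a constant combination whose
   coefficient at j* is nonzero.  If some proper subfamily is linearly
   dependent together with 1, its dependence is itself a constant
   combination: either it involves j*, and we pass to the subfamily, or it
   has a nonzero coefficient at some s0 <> j*, and subtracting a multiple of
   it from the current combination kills the coefficient at s0 without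
   touching the one at j*.  The index set strictly decreases, so the process
   stops at a set that is minimal, i.e. an affine symmetry. *)

Section ConstantCombinations.
Variables (R : realType) (J : finType) (f : J -> R -> R).

Definition const_comb (I : {set J}) (a : J -> R) : Prop :=
  exists z : R, forall t, \sum_(s in I) a s * f s t = z.

Definition const_comb_at (j : J) (I : {set J}) : Prop :=
  exists a : J -> R, a j != 0 /\ const_comb I a.

Lemma const_combB (I : {set J}) (a c : J -> R) (k : R) :
  const_comb I a -> const_comb I c -> const_comb I (fun s => a s - k * c s).
Proof.
move=> [z ha] [w hc]; exists (z - k * w) => t.
under eq_bigr do rewrite mulrBl -mulrA.
by rewrite sumrB -mulr_sumr ha hc.
Qed.

Lemma const_comb_setD1 (I : {set J}) (a : J -> R) (s0 : J) :
  s0 \in I -> a s0 = 0 -> const_comb I a -> const_comb (I :\ s0) a.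
Proof.
move=> hs0 ha0 [z ha]; exists z => t.
by rewrite -(ha t) (big_setD1 s0 hs0) /= ha0 mul0r add0r.
Qed.

Lemma const_comb_widen (I' I : {set J}) (c : J -> R) :
  I' \subset I -> const_comb I' c ->
  const_comb I (fun s => if s \in I' then c s else 0).
Proof.
move=> hsub [z hc]; exists z => t.
rewrite -(hc t) (big_setID I') /= (finset.setIidPr hsub).
rewrite [X in _ + X]big1 ?addr0 => [|s /setDP [_ /negbTE ->]]; last by rewrite mul0r.
by apply: eq_bigr => s ->.
Qed.

Lemma lin_dep_with_one_const_comb (I : {set J}) :
  lin_dep_with_one f I ->
  exists c : J -> R, const_comb I c /\ exists2 s, s \in I & c s != 0.
Proof.
move=> [c [c0 [hnz hsum]]]; exists c; split.
  by exists (- c0) => t; apply/eqP; rewrite -addr_eq0 hsum.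
case: hnz => [hc0 | [s [hs hcs]]]; last by exists s.
apply: contrapT => hzero; move: hc0 (hsum 0); rewrite big1 ?add0r => [/eqP //|s hs].
by case: (eqVneq (c s) 0) => [->|hcs]; [rewrite mul0r | case: hzero; exists s].
Qed.

Lemma const_comb_at_shrink (j : J) (I I' : {set J}) :
  j \in I -> const_comb_at j I -> I' \proper I -> lin_dep_with_one f I' ->
  exists2 K : {set J}, K \proper I & j \in K /\ const_comb_at j K.
Proof.
move=> hj [a [haj hca]] hprop /lin_dep_with_one_const_comb [c [hcc [s0 hs0 hcs0]]].
have [[hjI' hcj] | hnot] := pselect (j \in I' /\ c j != 0).
  by exists I' => //; split => //; exists c.
have hsub : I' \subset I by case/andP: hprop.
have hs0I : s0 \in I by exact: (fintype.subsetP hsub).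
pose c' s := if s \in I' then c s else 0.
have hc'j : c' j = 0.
  by rewrite /c'; case: ifP => // hjI'; apply/eqP/contraT => hcj; case: hnot.
have hc's0 : c' s0 != 0 by rewrite /c' hs0.
have hs0j : s0 != j by apply: contraNneq hc's0 => ->; rewrite hc'j.
pose a' s := a s - a s0 / c' s0 * c' s.
exists (I :\ s0); first exact: properD1.
split; first by rewrite !inE eq_sym hs0j.
exists a'; split; first by rewrite /a' hc'j mulr0 subr0.
apply: const_comb_setD1 => //; first by rewrite /a' divfK ?subrr.
exact/const_combB/const_comb_widen.
Qed.

Lemma const_comb_at_minimal (j : J) (I : {set J}) :
  j \in I -> const_comb_at j I ->
  exists K : {set J}, [/\ j \in K, const_comb_at j K &
    forall K' : {set J}, K' \proper K -> ~ lin_dep_with_one f K'].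
Proof.
have [n] := ubnP #|I|; elim: n I => // n IH I hn hj hI.
have [hmin | /existsNP [I' /not_implyP [hprop /contrapT hdep]]] :=
  pselect (forall K' : {set J}, K' \proper I -> ~ lin_dep_with_one f K').
  by exists I.
have [K hKI [hjK hK]] := const_comb_at_shrink hj hI hprop hdep.
by apply: (IH K) => //; apply: leq_trans (proper_card hKI) _.
Qed.

End ConstantCombinations.

Theorem lemma7 (R : realType) (rho : R -> R) (J : finType)
    (alpha beta gamma : J -> R) (jstar : J) :
  nonlinearity rho ->
  (exists C : R, forall t : R,
      \sum_(s : J) alpha s * rho (beta s * t + gamma s) = C) ->
  alpha jstar != 0 ->
  exists (I : {set J}) (alpha' : J -> R) (zeta : R),
    jstar \in I /\ alpha' jstar != 0 /\
    affine_symmetry rho I zeta alpha' beta gamma.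
Proof.
move=> _ [C hC] hajstar.
pose f s t := rho (beta s * t + gamma s).
have hjT : jstar \in [set: J]%SET by rewrite inE.
have hsetT : const_comb_at f jstar [set: J]%SET.
  exists alpha; split => //; exists C => t.
  by rewrite -(hC t); apply: eq_bigl => s; rewrite inE.
have [K [hjK [a [haj [z hz]]] hmin]] := const_comb_at_minimal hjT hsetT.
exists K, a, z; do 3!split => //.
by apply/set0Pn; exists jstar.
Qed.
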